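(* Let $z \in G_D(\mathbb{Q})$ and suppose $z = \pm\zeta_{p_1}^{\pm \alpha_1} \cdots \zeta_{p_k}^{\pm \alpha_k}$, where $p_1,\dots,p_k$ are distinct odd primes with $\left(\frac{-D}{p_i}\right) = 1$ for all $i$ and $\alpha_i \ge 1$. If $z$ corresponds to the normalized triple $(a, b, c)$, i.e. $z = \frac{\pm a \pm b\sqrt{-D}}{c}$ with $a^2+Db^2=c^2$, $a,b,c\in\mathbb{N}$ and $\gcd(a,b,c)=1$, then $c = p_1^{\alpha_1} \cdots p_k^{\alpha_k}$.
   Context: Let $D>1$ be a square-free integer with $-D \equiv 2$ or $3 \pmod 4$, and assume the class group $C(-4D)$ of primitive positive-definite binary quadratic forms of discriminant $-4D$ is a free $\mathbb{Z}_2$-module, i.e. $C(-4D)\cong(\mathbb{Z}/2\mathbb{Z})^n$ for some $n\ge 0$. Let $G_D(\mathbb{Q}) := \{a + b\sqrt{-D} \in \mathbb{Q}[\sqrt{-D}] : a^2 + Db^2 = 1\}$, a group under multiplication. A solution $(a,b,c)$ with $a,b,c\in\mathbb{N}$ of $x^2+Dy^2=z^2$ is normalized if $\gcd(a,b,c)=1$. For each odd prime $q$ with Legendre symbol $\left(\frac{-D}{q}\right) = 1$, there exist unique positive integers $x_0, y_0$ with $\gcd(x_0,y_0)=1$ and $q^2 = x_0^2 + D y_0^2$; define $\zeta_q := \frac{x_0 + y_0\sqrt{-D}}{q} \in G_D(\mathbb{Q})$. *)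

From HB Require Import structures.
From mathcomp Require Import all_boot all_order all_algebra.
Set Implicit Arguments. Unset Strict Implicit. Unset Printing Implicit Defensive.
Import Order.TTheory GRing.Theory Num.Theory.
Local Open Scope ring_scope.

Definition squarefree (n : nat) : Prop :=
  forall p : nat, prime p -> ~ (p ^ 2 %| n)%N.

Definition legendre_negD_one (D q : nat) : Prop :=
  ~ (q %| D)%N /\ exists t : int, (t ^+ 2 = - (D%:Z) %[mod q%:Z])%Z.

(* the form (a,b,c) transformed by the integer matrix [[p, q], [r, s]]:
   g(x, y) = f(p x + q y, r x + s y) *)
Definition form_act (f : int * int * int) (p q r s : int) : int * int * int :=
  let: (a, b, c) := f in
  (a * p ^+ 2 + b * p * r + c * r ^+ 2,
   2 * a * p * q + b * (p * s + q * r) + 2 * c * r * s,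
   a * q ^+ 2 + b * q * s + c * s ^+ 2).

Definition proper_equiv (f g : int * int * int) : Prop :=
  exists p q r s : int, p * s - q * r = 1 /\ form_act f p q r s = g.

(* The form class group C(disc) of primitive positive-definite forms of
   discriminant disc is an elementary abelian 2-group (i.e. isomorphic to
   (Z/2Z)^n for some n): every class equals its inverse.  The inverse of
   the class of (a,b,c) is the class of (a,-b,c). *)
Definition class_group_elem2 (disc : int) : Prop :=
  forall a b c : int,
    0 < a -> b ^+ 2 - 4 * a * c = disc ->
    gcdz a (gcdz b c) = 1 ->
    proper_equiv (a, b, c) (a, - b, c).

(* An element a + b sqrt(-D) is represented by the pair (a, b). *)

Definition inGD (D : nat) (z : rat * rat) : Prop :=
  z.1 ^+ 2 + D%:R * z.2 ^+ 2 = 1.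

Definition gmul (D : nat) (u v : rat * rat) : rat * rat :=
  (u.1 * v.1 - D%:R * u.2 * v.2, u.1 * v.2 + u.2 * v.1).

Definition gone : rat * rat := (1, 0).

Definition ginv (u : rat * rat) : rat * rat := (u.1, - u.2).

Definition gpow (D : nat) (u : rat * rat) (e : int) : rat * rat :=
  match e with
  | Posz n => iter n (gmul D u) gone
  | Negz n => iter n.+1 (gmul D (ginv u)) gone
  end.

Definition zeta (q x0 y0 : nat) : rat * rat :=
  (x0%:R / q%:R, y0%:R / q%:R).

Definition zeta_data (D q x0 y0 : nat) : Prop :=
  (0 < x0)%N /\ (0 < y0)%N /\ coprime x0 y0 /\ (q ^ 2 = x0 ^ 2 + D * y0 ^ 2)%N.

(* Write zeta_q^(+-1) = (x +- y sqrt(-D)) / q.  Then z = s (A + B sqrt(-D)) / N with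
   N = prod p_i^|alpha_i| and A + B sqrt(-D) the product of the numerators in
   Z[sqrt(-D)].  Both (a, b, c) and (|A|, |B|, N) describe z in lowest terms as soon
   as no p_j divides both A and B, and then c = N.  To see that p_j cannot divide
   both, map Z[sqrt(-D)] to F_(p_j) by sending sqrt(-D) to t = x_j / (+-y_j), a root
   of T^2 + D because p_j | x_j^2 + D y_j^2: the numerator of the zeta_(p_j) factor
   goes to 2 x_j <> 0, and every other factor has norm p_i^2, prime to p_j, so its
   image is nonzero too. *)

From HB Require Import structures.
From mathcomp Require Import all_boot all_order all_algebra.
From mathcomp Require Import ring zify.
Import Order.TTheory GRing.Theory Num.Theory.
Local Open Scope ring_scope.

(* A pair (a, b) of integers stands for a + b sqrt(-D) in Z[sqrt(-D)]. *)
Definition zmul (D : nat) (u v : int * int) : int * int :=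
  (u.1 * v.1 - D%:Z * u.2 * v.2, u.1 * v.2 + u.2 * v.1).

Definition zone : int * int := (1, 0).

Definition zconj (u : int * int) : int * int := (u.1, - u.2).

Definition zpow (D : nat) (u : int * int) (n : nat) : int * int :=
  iter n (zmul D u) zone.

Definition znorm (D : nat) (u : int * int) : int := u.1 ^+ 2 + D%:Z * u.2 ^+ 2.

Definition zfrac (n : nat) (u : int * int) : rat * rat :=
  (u.1%:~R / n%:R, u.2%:~R / n%:R).

Definition zeta_base (x y : nat) (e : int) : int * int :=
  if e is Negz _ then zconj (x : int, y : int) else (x : int, y : int).

Lemma znorm_conj D u : znorm D (zconj u) = znorm D u.
Proof. by rewrite /znorm /= sqrrN. Qed.

Section Fractions.
Variable D : nat.

Lemma gmul_zfrac m n u v : (0 < m)%N -> (0 < n)%N ->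
  gmul D (zfrac m u) (zfrac n v) = zfrac (m * n) (zmul D u v).
Proof.
rewrite -!(ltr0n rat) => /lt0r_neq0 m_neq0 /lt0r_neq0 n_neq0.
rewrite /gmul /zfrac /zmul /= natrM.
by congr (_, _); rewrite !(rmorphB, rmorphD, rmorphM) /=; field; exact/andP.
Qed.

Lemma gone_zfrac : gone = zfrac 1 zone.
Proof. by rewrite /zfrac /= !divr1. Qed.

Lemma ginv_zfrac n u : ginv (zfrac n u) = zfrac n (zconj u).
Proof. by rewrite /ginv /zfrac /= rmorphN mulNr. Qed.

Lemma iter_gmul_zfrac n u m : (0 < n)%N ->
  iter m (gmul D (zfrac n u)) gone = zfrac (n ^ m) (zpow D u m).
Proof.
move=> n_gt0; elim: m => [|m IHm] /=; first exact: gone_zfrac.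
by rewrite IHm gmul_zfrac ?expn_gt0 ?n_gt0 // -expnS.
Qed.

Lemma gpow_zfrac n u e : (0 < n)%N ->
  gpow D (zfrac n u) e =
  zfrac (n ^ `|e|) (zpow D (if e is Negz _ then zconj u else u) `|e|).
Proof.
by move=> n_gt0; case: e => m; rewrite /gpow ?ginv_zfrac; apply: iter_gmul_zfrac.
Qed.

Definition zeta_num (x y : nat) (e : int) : int * int :=
  zpow D (zeta_base x y e) `|e|.

Lemma gpow_zeta q x y e : (0 < q)%N ->
  gpow D (zeta q x y) e = zfrac (q ^ `|e|) (zeta_num x y e).
Proof. by move=> q_gt0; rewrite -gpow_zfrac. Qed.

Lemma big_gmul_zfrac (I : Type) (r : seq I) (P : pred I) (n : I -> nat)
    (u : I -> int * int) :
  (forall i, P i -> 0 < n i)%N ->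
  \big[gmul D/gone]_(i <- r | P i) zfrac (n i) (u i) =
  zfrac (\prod_(i <- r | P i) n i) (\big[zmul D/zone]_(i <- r | P i) u i).
Proof.
move=> n_gt0.
pose Q w N v := w = zfrac N v /\ (0 < N)%N.
suff [] : Q (\big[gmul D/gone]_(i <- r | P i) zfrac (n i) (u i))
  (\prod_(i <- r | P i) n i)%N (\big[zmul D/zone]_(i <- r | P i) u i) by [].
apply: (big_rec3 Q); first by rewrite gone_zfrac.
move=> i w N v Pi [-> N_gt0]; split; last by rewrite muln_gt0 n_gt0 ?N_gt0.
exact: gmul_zfrac (n_gt0 i Pi) N_gt0.
Qed.

End Fractions.

Definition zeval {F : comNzRingType} (t : F) (u : int * int) : F :=
  u.1%:~R + u.2%:~R * t.

Section Evaluation.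
Context {F : comNzRingType} {D : nat} {t : F}.
Hypothesis sqr_t : t ^+ 2 = - D%:R.
Local Notation zeval := (zeval t).

Lemma zeval_mul u v : zeval (zmul D u v) = zeval u * zeval v.
Proof.
rewrite /zeval /zmul /= !(rmorphB, rmorphD, rmorphM) /=.
have -> : (D%:Z)%:~R = - t ^+ 2 :> F by rewrite sqr_t opprK.
ring.
Qed.

Lemma zeval_one : zeval zone = 1.
Proof. by rewrite /zeval /= mul0r addr0. Qed.

Lemma zeval_pow u n : zeval (zpow D u n) = zeval u ^+ n.
Proof.
by elim: n => [|n IHn] /=; rewrite ?zeval_one // zeval_mul IHn exprS.
Qed.

Lemma zeval_big (I : Type) (r : seq I) (P : pred I) (u : I -> int * int) :
  zeval (\big[zmul D/zone]_(i <- r | P i) u i) = \prod_(i <- r | P i) zeval (u i).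
Proof. exact: (big_morph zeval zeval_mul zeval_one). Qed.

Lemma zeval_norm u : zeval u * zeval (zconj u) = (znorm D u)%:~R.
Proof.
rewrite -zeval_mul /zeval /zmul /znorm /=.
have -> : u.1 * - u.2 + u.2 * u.1 = 0 by ring.
by rewrite mul0r addr0; congr (_%:~R); ring.
Qed.

End Evaluation.

Lemma zeta_data_ndvd {D q x y : nat} :
  prime q -> ~ (q %| D)%N -> zeta_data D q x y -> ~~ (q %| x)%N /\ ~~ (q %| y)%N.
Proof.
move=> q_pr q_ndvd_D [_ [_ [co_xy norm_q]]].
have q_dvd_norm : (q %| x ^ 2 + D * y ^ 2)%N by rewrite -norm_q dvdn_mulr.
have x_of_y : (q %| y -> q %| x)%N.
  move=> q_dvd_y; move: q_dvd_norm.
  rewrite (dvdn_addl _ (dvdn_mull _ (dvdn_exp _ q_dvd_y))) //.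
  by rewrite Euclid_dvdX // => /andP[].
have y_of_x : (q %| x -> q %| y)%N.
  move=> q_dvd_x; move: q_dvd_norm; rewrite (dvdn_addr _ (dvdn_exp _ q_dvd_x)) //.
  by rewrite Euclid_dvdM // Euclid_dvdX // (negPf (introN idP q_ndvd_D)) andbT.
have not_both : ~~ ((q %| x) && (q %| y))%N.
  rewrite -dvdn_gcd (eqP co_xy) dvdn1.
  by apply: contraTneq q_pr => ->.
by split; apply: contra not_both => q_dvd;
  [rewrite q_dvd (y_of_x q_dvd) | rewrite q_dvd (x_of_y q_dvd)].
Qed.

Lemma zprod_coord_ndvd D q k (u : 'I_k -> int * int) (n : 'I_k -> nat) (j : 'I_k) :
  prime q -> odd q ->
  (q %| znorm D (u j))%Z -> ~~ (q %| (u j).1)%Z -> ~~ (q %| (u j).2)%Z ->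
  (forall i, i != j -> ~~ (q %| znorm D (u i))%Z) ->
  ~~ ((q %| (\big[zmul D/zone]_(i < k) zpow D (u i) (n i)).1)%Z &&
      (q %| (\big[zmul D/zone]_(i < k) zpow D (u i) (n i)).2)%Z).
Proof.
move=> q_pr q_odd q_dvd_norm q_ndvd_1 q_ndvd_2 q_ndvd_norm.
have int_eq0 (m : int) : (m%:~R == 0 :> 'F_q) = (q %| m)%Z.
  by rewrite (dvdz_pcharf (pchar_Fp q_pr)).
set v := u j.
have v1_neq0 : v.1%:~R != 0 :> 'F_q by rewrite int_eq0.
have v2_neq0 : v.2%:~R != 0 :> 'F_q by rewrite int_eq0.
have two_neq0 : 2%:R != 0 :> 'F_q.
  rewrite -[2%:R]/(2%:~R) int_eq0 -[(_ %| _)%Z]/(q %| 2)%N dvdn_prime2 //.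
  by apply: contraL q_odd => /eqP ->.
have norm_v : v.1%:~R ^+ 2 = - D%:R * v.2%:~R ^+ 2 :> 'F_q.
  move: q_dvd_norm; rewrite -int_eq0 /znorm rmorphD rmorphM !rmorphXn /=.
  by rewrite addr_eq0 => /eqP ->; rewrite mulNr.
pose t : 'F_q := v.1%:~R / v.2%:~R.
have sqr_t : t ^+ 2 = - D%:R by rewrite expr_div_n norm_v mulfK // expf_neq0.
have zeval_u_neq0 i : zeval t (u i) != 0.
  have [-> | i_neq_j] := eqVneq i j.
    by rewrite -/v /zeval /t mulrCA mulfV // mulr1 -mulr2n -mulr_natr mulf_neq0.
  apply: contraNneq (q_ndvd_norm i i_neq_j) => zeval_eq0.
  by rewrite -int_eq0 -(zeval_norm sqr_t) zeval_eq0 mul0r.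
apply: contraL (_ : zeval t (\big[zmul D/zone]_(i < k) zpow D (u i) (n i)) != 0).
  by rewrite /zeval -!int_eq0 => /andP [/eqP -> /eqP ->]; rewrite mul0r addr0 eqxx.
rewrite (zeval_big sqr_t); apply/prodf_neq0 => i _.
by rewrite (zeval_pow sqr_t) expf_neq0.
Qed.

Lemma zeta_prod_num_coprime D k (p x0 y0 : 'I_k -> nat) (e : 'I_k -> int)
    (j : 'I_k) :
  injective p -> (forall i, prime (p i)) -> odd (p j) -> ~ (p j %| D)%N ->
  (forall i, zeta_data D (p i) (x0 i) (y0 i)) ->
  coprime (p j)
    (gcdn `|(\big[zmul D/zone]_(i < k) zeta_num D (x0 i) (y0 i) (e i)).1|
          `|(\big[zmul D/zone]_(i < k) zeta_num D (x0 i) (y0 i) (e i)).2|).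
Proof.
move=> p_inj p_pr pj_odd pj_ndvd_D zeta_p.
pose u i := zeta_base (x0 i) (y0 i) (e i).
have norm_u i : znorm D (u i) = (p i ^ 2)%N.
  have norm_xy := (zeta_p i).2.2.2.
  by rewrite /u /zeta_base; case: (e i) => _; rewrite ?znorm_conj /znorm /=; lia.
have coords_u i : `|(u i).1|%N = x0 i /\ `|(u i).2|%N = y0 i.
  by rewrite /u /zeta_base; case: (e i) => _ /=; rewrite ?abszN.
have [pj_ndvd_x pj_ndvd_y] := zeta_data_ndvd (p_pr j) pj_ndvd_D (zeta_p j).
rewrite prime_coprime // dvdn_gcd; apply: zprod_coord_ndvd => //.
- by rewrite dvdzE norm_u /= dvdn_exp.
- by rewrite dvdzE (coords_u j).1.
- by rewrite dvdzE (coords_u j).2.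
move=> i i_neq_j; rewrite dvdzE norm_u /= Euclid_dvdX // dvdn_prime2 // andbT.
by apply: contra i_neq_j => /eqP /p_inj ->.
Qed.

Lemma reduced_denom_dvdn {a b c A B N : nat} : gcdn a (gcdn b c) = 1%N ->
  (a * N = A * c)%N -> (b * N = B * c)%N -> (c %| N)%N.
Proof.
move=> co_abc aN bN.
have <- : gcdn (a * N) (gcdn (b * N) (c * N))%N = N.
  by rewrite -!muln_gcdl co_abc mul1n.
by rewrite aN bN !dvdn_gcd -!(mulnC c) !dvdn_mulr.
Qed.

Lemma reduced_denom_unique {a b c A B N : nat} :
  gcdn a (gcdn b c) = 1%N -> gcdn A (gcdn B N) = 1%N ->
  (a * N = A * c)%N -> (b * N = B * c)%N -> c = N.
Proof.
move=> co_abc co_ABN aN bN; apply/eqP; rewrite eqn_dvd.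
rewrite (reduced_denom_dvdn co_abc aN bN).
by rewrite (reduced_denom_dvdn co_ABN (esym aN) (esym bN)).
Qed.

Lemma signed_frac_cross {R : numFieldType} {m c N : nat} {s x : R} {U : int} :
  (0 < c)%N -> (0 < N)%N -> `|s| = 1 ->
  x = m%:R / c%:R \/ x = - (m%:R / c%:R) -> x = s * (U%:~R / N%:R) ->
  (m * N = `|U| * c)%N.
Proof.
rewrite -!(ltr0n R) => c_gt0 N_gt0 norm_s x_eq xU_eq.
have : `|x| = m%:R / c%:R.
  by case: x_eq => ->; rewrite ?normrN ger0_norm ?divr_ge0 ?ler0n.
rewrite xU_eq normrM norm_s mul1r normrM normfV (gtr0_norm N_gt0).
rewrite -intr_norm -natr_absz => /eqP.
by rewrite eq_sym eqr_div ?lt0r_neq0 // -!natrM eqr_nat => /eqP.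
Qed.

Lemma coprime_prod_expr m k (p n : 'I_k -> nat) :
  (forall i, coprime m (p i)) -> coprime m (\prod_(i < k) p i ^ n i).
Proof.
move=> co_mp; apply: (big_ind (coprime m)) => [|m1 m2|i _]; first exact: coprimen1.
  by rewrite coprimeMr => -> ->.
exact: coprimeXr.
Qed.

Theorem theorem3p8
  (D : nat)
  (hD1 : (1 < D)%N)
  (hDsf : squarefree D)
  (hDmod : (D %% 4 = 1)%N \/ (D %% 4 = 2)%N)
  (hcl : class_group_elem2 (- 4 * D%:Z))
  (k : nat) (p : 'I_k -> nat) (x0 y0 : 'I_k -> nat) (e : 'I_k -> int)
  (s : rat)
  (hp_inj : injective p)
  (hp_prime : forall i, prime (p i))
  (hp_odd : forall i, odd (p i))
  (hp_leg : forall i, legendre_negD_one D (p i))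
  (hzeta : forall i, zeta_data D (p i) (x0 i) (y0 i))
  (he : forall i, e i != 0)
  (hs : s = 1 \/ s = -1)
  (z : rat * rat)
  (hzG : inGD D z)
  (hz : z = let w := \big[gmul D/gone]_(i < k) gpow D (zeta (p i) (x0 i) (y0 i)) (e i)
            in (s * w.1, s * w.2))
  (a b c : nat)
  (habc : (a ^ 2 + D * b ^ 2 = c ^ 2)%N)
  (hgcd : gcdn a (gcdn b c) = 1%N)
  (hza : z.1 = a%:R / c%:R \/ z.1 = - (a%:R / c%:R))
  (hzb : z.2 = b%:R / c%:R \/ z.2 = - (b%:R / c%:R)) :
  c = (\prod_(i < k) p i ^ `|e i|)%N.
Proof.
have p_gt0 i : (0 < p i)%N := prime_gt0 (hp_prime i).
set N := (\prod_(i < k) p i ^ `|e i|)%N.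
set P := \big[zmul D/zone]_(i < k) zeta_num D (x0 i) (y0 i) (e i).
have N_gt0 : (0 < N)%N by rewrite prodn_gt0 // => i; rewrite expn_gt0 p_gt0.
have c_gt0 : (0 < c)%N.
  rewrite lt0n; apply: contra_eq_neq hgcd => c0; rewrite c0 in habc *.
  by have [-> ->] : a = 0%N /\ b = 0%N by nia.
have s_norm : `|s| = 1 by case: hs => ->; rewrite ?normrN normr1.
have z_eq : z = (s * (zfrac N P).1, s * (zfrac N P).2).
  rewrite hz (eq_bigr _ (fun i _ => gpow_zeta D _ _ _ _ (p_gt0 i))).
  by rewrite big_gmul_zfrac // => i; rewrite expn_gt0 p_gt0.
have aN := signed_frac_cross c_gt0 N_gt0 s_norm hza (congr1 fst z_eq).
have bN := signed_frac_cross c_gt0 N_gt0 s_norm hzb (congr1 snd z_eq).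
apply: reduced_denom_unique hgcd _ aN bN.
rewrite gcdnA; apply/eqP; apply: coprime_prod_expr => i; rewrite coprime_sym.
exact: zeta_prod_num_coprime (hp_odd i) (hp_leg i).1 hzeta.
Qed.
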